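(* Let $s,k$ be job indices and let $S$ be an $(s,k)$-schedule (with the earliest-deadline property) with $C_{\max}(S)=t$. Suppose $[u,t)$ is a fixed segment of $S$. Then every job $i\le k$ with $u<C_i(S)\le t$ satisfies $C_i(S)=C^{\mathrm{edf}}_{s,i}$.
   Context: Time is discrete (slots $[t,t+1)$). There are $n$ jobs, job $j$ with integer processing time $p_j\ge1$, release time $r_j$, deadline $d_j$; jobs are indexed so that $d_1<\dots<d_n$, release times are pairwise distinct, and the instance is feasible. A (partial) schedule assigns to each slot at most one job so that each job it schedules receives exactly $p_j$ slots within $[r_j,d_j)$; $C_j(S)$ is the completion time of $j$ and $C_{\max}(S)=\max_jC_j(S)$. The earliest-deadline property: whenever $S$ is busy at slot $t$, it executes the released, not yet completed scheduled job with smallest deadline; all schedules are assumed to have this property. For $s\in\{1,\dots,n\}$, $k\in\{0,\dots,n\}$, an $(s,k)$-schedule is a schedule $S$ with $C_{\max}(S)\le d_k$ that schedules exactly the jobs $j\le k$ with $r_s\le r_j<C_{\max}(S)$ (the empty schedule counts, with $C_{\max}=r_s$). For $r_i\ge r_s$, $C^{\mathrm{edf}}_{s,i}$ is the minimum completion time of job $i$ over all $(s,i)$-schedules that schedule $i$. An interval $[t',t)$ in which $S$ is busy at every slot is a fixed segment of $S$ if every job executed by $S$ in $[t',t)$ is released in $[t',t)$ and has all its slots in $[t',t)$. *)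

From mathcomp Require Import all_boot.
Set Implicit Arguments. Unset Strict Implicit. Unset Printing Implicit Defensive.

(* An instance: jobs are indexed 1..n; time is nat (slot t = [t,t+1)). *)
Record instance := Instance {
  njobs : nat;
  ptime : nat -> nat;
  rel   : nat -> nat;
  dl    : nat -> nat
}.

Definition schedule := nat -> option nat.

Definition scheduled (S : schedule) (j : nat) : Prop := exists t, S t = Some j.

Definition valid_schedule (I : instance) (S : schedule) : Prop :=
  (forall t j, S t = Some j -> 1 <= j <= njobs I /\ rel I j <= t < dl I j) /\
  (forall j, scheduled S j -> \sum_(t < dl I j) (S t == Some j) = ptime I j).

(* Completion time C_j(S) (last slot + 1); equals 0 iff j is not scheduled. *)
Definition Ctime (I : instance) (S : schedule) (j : nat) : nat :=
  \max_(t < dl I j | S t == Some j) t.+1.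

Definition Cmax (I : instance) (S : schedule) : nat :=
  \max_(1 <= j < (njobs I).+1) Ctime I S j.

(* C_max with the convention C_max(empty) = r_s used for (s,k)-schedules. *)
Definition Cmax_s (I : instance) (s : nat) (S : schedule) : nat :=
  if Cmax I S == 0 then rel I s else Cmax I S.

Definition edf (I : instance) (S : schedule) : Prop :=
  forall t j, S t = Some j ->
  forall j', scheduled S j' -> rel I j' <= t -> t < Ctime I S j' ->
    dl I j <= dl I j'.

Definition valid_instance (I : instance) : Prop :=
  (forall j, 1 <= j <= njobs I -> 1 <= ptime I j) /\
  (forall j j', 1 <= j -> j < j' -> j' <= njobs I -> dl I j < dl I j') /\
  (forall j j', 1 <= j <= njobs I -> 1 <= j' <= njobs I ->
      rel I j = rel I j' -> j = j') /\
  (exists S, valid_schedule I S /\ forall j, 1 <= j <= njobs I -> scheduled S j).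

Definition sk_schedule (I : instance) (s k : nat) (S : schedule) : Prop :=
  valid_schedule I S /\ edf I S /\
  Cmax_s I s S <= dl I k /\
  (forall j, scheduled S j <->
     (1 <= j <= k /\ rel I s <= rel I j /\ rel I j < Cmax_s I s S)).

Definition is_Cedf (I : instance) (s i c : nat) : Prop :=
  (exists S', sk_schedule I s i S' /\ scheduled S' i /\ Ctime I S' i = c) /\
  (forall S', sk_schedule I s i S' -> scheduled S' i -> c <= Ctime I S' i).

Definition fixed_segment (I : instance) (S : schedule) (u t : nat) : Prop :=
  forall x, u <= x < t -> exists j, S x = Some j /\
    u <= rel I j < t /\ (forall y, S y = Some j -> u <= y < t).

(* Truncating S at C_i(S) to the jobs j <= i gives an (s,i)-schedule that
   completes i at C_i(S): by the earliest-deadline property, every job j <= i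
   released before C_i(S) is already finished by then.  Conversely, let v be
   the least point of the fixed segment after which S runs only jobs j <= i up
   to C_i(S); all of them are released at or after v, for otherwise the job of
   larger index running just before v would contradict the earliest-deadline
   property.  An (s,i)-schedule completing i at some c < C_i(S) would have to
   fit every job j <= i released in [v, c) into [v, c), whereas S keeps [v, c)
   busy with these jobs and still runs i after c. *)

From mathcomp Require Import all_boot zify.
(* Imported after all_boot, so that [rel] is the release time rather than
   ssrbool's type of relations. *)
Set Implicit Arguments. Unset Strict Implicit. Unset Printing Implicit Defensive.

Lemma leq_sum_point (I : eqType) (r : seq I) (P : pred I) (F : I -> nat) i :
  i \in r -> P i -> F i <= \sum_(j <- r | P j) F j.
Proof. by move=> ri Pi; rewrite (big_rem i ri) Pi leq_addr. Qed.

Lemma ltn_sum (I : eqType) (r : seq I) (P : pred I) (E1 E2 : I -> nat) i :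
  i \in r -> P i -> E1 i < E2 i -> (forall j, P j -> E1 j <= E2 j) ->
  \sum_(j <- r | P j) E1 j < \sum_(j <- r | P j) E2 j.
Proof.
move=> ri Pi lt_i le_E; rewrite !(big_rem i ri) Pi.
by rewrite -addSn leq_add // leq_sum.
Qed.

Lemma sum_nat_support (f : nat -> nat) (a b N : nat) :
  b <= N -> (forall x, f x != 0 -> a <= x < b) ->
  \sum_(0 <= x < N) f x = \sum_(a <= x < b) f x.
Proof.
move=> le_bN supp_f.
rewrite (big_nat_widen _ _ _ _ _ le_bN) (big_nat_widenl _ _ _ _ _ (leq0n a)).
rewrite [RHS]big_mkcond; apply: eq_bigr => x _ /=.
case: ifP => // out; apply/eqP; apply: contraFT out => /supp_f.
by rewrite andbC.
Qed.

Lemma leq_sum_nat_subrange (f : nat -> nat) (a b N : nat) :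
  b <= N -> \sum_(a <= x < b) f x <= \sum_(0 <= x < N) f x.
Proof.
move=> le_bN.
rewrite (big_nat_widen _ _ _ _ _ le_bN) (big_nat_widenl _ _ _ _ _ (leq0n a)).
by rewrite big_mkcond; apply: leq_sum => x _; case: ifP.
Qed.

Lemma leq_sum_nat_subrange_point (f : nat -> nat) (a b y N : nat) :
  b <= y < N -> \sum_(a <= x < b) f x + f y <= \sum_(0 <= x < N) f x.
Proof.
move=> /andP[le_by lt_yN].
rewrite [X in _ <= X](big_cat_nat _ (n := b)) ?(leq_trans le_by (ltnW lt_yN)) //=.
apply: leq_add; first exact: leq_sum_nat_subrange.
by apply: leq_sum_point; rewrite // mem_index_iota le_by.
Qed.

Definition work (S : schedule) (j a b : nat) : nat :=
  \sum_(a <= x < b) (S x == Some j).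

Lemma sum_work_le_length (S : schedule) (P : pred nat) (N a b : nat) :
  \sum_(0 <= j < N | P j) work S j a b <= b - a.
Proof.
rewrite /work exchange_big_nat -[b - a]muln1 -sum_nat_const_nat.
apply: leq_sum => x _; case: (S x) => [j0|]; last by rewrite big1.
apply: (@leq_trans (\sum_(0 <= j < N | j == j0) 1)).
  rewrite [X in X <= _]big_mkcond [X in _ <= X]big_mkcond.
  by apply: leq_sum => j _; case: (P j); case: eqP => // -[->]; rewrite eqxx.
by rewrite sum1_count count_uniq_mem ?iota_uniq ?leq_b1.
Qed.

Lemma length_le_sum_work (S : schedule) (P : pred nat) (N a b : nat) :
  (forall x, a <= x < b -> exists j, [/\ S x = Some j, P j & j < N]) ->
  b - a <= \sum_(0 <= j < N | P j) work S j a b.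
Proof.
move=> busy; rewrite /work exchange_big_nat -[b - a]muln1 -sum_nat_const_nat.
rewrite big_seq [X in _ <= X]big_seq; apply: leq_sum => x.
rewrite mem_index_iota => /busy [j [Sx Pj lt_jN]].
apply: leq_trans (leq_sum_point _ _ Pj); first by rewrite Sx eqxx.
by rewrite mem_index_iota.
Qed.

Section CompletionTime.
Variables (I : instance) (S : schedule).

Lemma Ctime_gt j x : S x = Some j -> x < dl I j -> x < Ctime I S j.
Proof.
move=> Sx lt_x; have := @leq_bigmax_cond _ (fun t : 'I_(dl I j) => S t == Some j)
  (fun t => (nat_of_ord t).+1) (Ordinal lt_x).
by rewrite /= Sx eqxx; apply.
Qed.

Lemma Ctime_le j b :
  (forall y, S y = Some j -> y < dl I j -> y < b) -> Ctime I S j <= b.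
Proof. by move=> lt_b; apply/bigmax_leqP => y /eqP Sy; apply: lt_b. Qed.

Lemma Ctime_le_dl j : Ctime I S j <= dl I j.
Proof. exact: Ctime_le. Qed.

Lemma Ctime_last j : 0 < Ctime I S j -> S (Ctime I S j).-1 = Some j.
Proof.
rewrite /Ctime; case: (posnP #|[pred t : 'I_(dl I j) | S t == Some j]|) => [|pos].
  by move=> /card0_eq none; rewrite big_pred0 // => y; have := none y; rewrite !inE.
have [y Sy ->] := eq_bigmax_cond (fun t : 'I_(dl I j) => (nat_of_ord t).+1) pos.
by move: Sy; rewrite inE => /eqP.
Qed.

Lemma Ctime_le_Cmax_s s j : 1 <= j <= njobs I -> Ctime I S j <= Cmax_s I s S.
Proof.
move=> j_job; have : Ctime I S j <= Cmax I S.
  by apply: leq_bigmax_seq; rewrite // mem_index_iota ltnS.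
by rewrite /Cmax_s; case: eqP => // ->; rewrite leqn0 => /eqP ->.
Qed.

End CompletionTime.

Section ValidSchedule.
Variables (I : instance) (S : schedule).
Hypothesis HV : valid_schedule I S.

Lemma valid_slot j x : S x = Some j -> 1 <= j <= njobs I /\ rel I j <= x < dl I j.
Proof. exact: (proj1 HV). Qed.

Lemma slot_lt_Ctime j x : S x = Some j -> x < Ctime I S j.
Proof. by move=> Sx; have [_ /andP[_ lt_dl]] := valid_slot Sx; apply: Ctime_gt Sx lt_dl. Qed.

Lemma scheduled_job j : scheduled S j -> 1 <= j <= njobs I.
Proof. by case=> x /valid_slot []. Qed.

Lemma scheduled_Ctime_gt0 j : scheduled S j <-> 0 < Ctime I S j.
Proof.
split; first by case=> x /slot_lt_Ctime; apply: leq_ltn_trans.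
by move=> /Ctime_last; exists (Ctime I S j).-1.
Qed.

Lemma ptime_eq_work j N : scheduled S j -> dl I j <= N -> ptime I j = work S j 0 N.
Proof.
move=> sched_j le_dl; rewrite -(proj2 HV j sched_j).
rewrite -(big_mkord xpredT (fun x => nat_of_bool (S x == Some j))) /work.
apply/esym/sum_nat_support => // x; rewrite eqb0 negbK => /eqP /valid_slot[_].
by case/andP.
Qed.

Lemma work_le_ptime j a b : scheduled S j -> work S j a b <= ptime I j.
Proof.
move=> sched_j; rewrite (ptime_eq_work sched_j (leq_maxr b (dl I j))).
exact/leq_sum_nat_subrange/leq_maxl.
Qed.

Lemma work_lt_ptime j a b y : S y = Some j -> b <= y -> work S j a b < ptime I j.
Proof.
move=> Sy le_by; have sched_j : scheduled S j by exists y.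
rewrite (ptime_eq_work sched_j (leq_maxr y.+1 (dl I j))).
have := @leq_sum_nat_subrange_point (fun x => S x == Some j) a b y (maxn y.+1 (dl I j)).
by rewrite /= Sy eqxx addn1; apply; rewrite le_by leq_max ltnSn.
Qed.

Lemma work_eq_ptime j a b :
  scheduled S j -> (forall y, S y = Some j -> a <= y < b) -> work S j a b = ptime I j.
Proof.
move=> sched_j inside; rewrite (ptime_eq_work sched_j (leq_maxr b (dl I j))).
apply/esym/sum_nat_support; first exact: leq_maxl.
by move=> x; rewrite eqb0 negbK => /eqP /inside.
Qed.

End ValidSchedule.

Definition truncate (S : schedule) (i C : nat) : schedule :=
  fun x => if S x is Some j then if (x < C) && (j <= i) then Some j else None
           else None.

Lemma truncate_SomeE S i C x j :
  truncate S i C x = Some j <-> [/\ S x = Some j, x < C & j <= i].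
Proof.
rewrite /truncate; case: (S x) => [j'|]; last by split=> // -[].
case: ifP => [/andP[lt_xC le_j'i]|out]; split=> //.
- by case=> <-.
- by case=> -[<-].
- by case=> -[<-] lt_xC le_j'i; rewrite lt_xC le_j'i in out.
Qed.

Section EdfSchedule.
Variables (I : instance) (S : schedule).
Hypotheses (HV : valid_schedule I S) (HE : edf I S).
Hypothesis dl_increasing :
  forall j j', 1 <= j -> j < j' -> j' <= njobs I -> dl I j < dl I j'.

Lemma edf_pending_index x j j' :
  S x = Some j -> scheduled S j' -> rel I j' <= x < Ctime I S j' -> j <= j'.
Proof.
move=> Sx sched_j' /andP[le_rx lt_xC]; rewrite leqNgt; apply/negP => lt_j'j.
have /andP[_ le_jn] := scheduled_job HV (ex_intro _ x Sx).
have /andP[j'_gt0 _] := scheduled_job HV sched_j'.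
have := HE Sx sched_j' le_rx lt_xC.
by rewrite leqNgt dl_increasing.
Qed.

Lemma edf_Ctime_le i j :
  j <= i -> scheduled S i -> scheduled S j -> rel I j < Ctime I S i ->
  Ctime I S j <= Ctime I S i.
Proof.
move=> le_ji sched_i sched_j lt_rC; rewrite leqNgt; apply/negP => lt_CC.
have /Ctime_last last_i : 0 < Ctime I S i by apply/scheduled_Ctime_gt0.
have := edf_pending_index last_i sched_j.
have -> : rel I j <= (Ctime I S i).-1 < Ctime I S j by lia.
move=> /(_ isT) le_ij; have eq_ij : i = j by apply/eqP; rewrite eqn_leq le_ij.
by rewrite eq_ij ltnn in lt_CC.
Qed.

Section Truncation.
Variable i : nat.
Hypothesis sched_i : scheduled S i.
Local Notation C := (Ctime I S i).
Local Notation T := (truncate S i C).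

Lemma scheduled_truncate j :
  scheduled T j <-> [/\ j <= i, scheduled S j & rel I j < C].
Proof.
split.
- case=> x /truncate_SomeE[Sx lt_xC le_ji]; split=> //; first by exists x.
  by have [_ /andP[le_rx _]] := valid_slot HV Sx; apply: leq_ltn_trans le_rx lt_xC.
- case=> le_ji sched_j lt_rC; exists (Ctime I S j).-1; apply/truncate_SomeE.
  have C_j_gt0 : 0 < Ctime I S j by apply/scheduled_Ctime_gt0.
  split=> //; first exact: Ctime_last.
  by have := edf_Ctime_le le_ji sched_i sched_j lt_rC; lia.
Qed.

Lemma truncate_slotE j y : scheduled T j -> (T y == Some j) = (S y == Some j).
Proof.
move=> /scheduled_truncate[le_ji sched_j lt_rC].
apply/eqP/eqP => [/truncate_SomeE[]//|Sy]; apply/truncate_SomeE; split=> //.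
exact: leq_trans (slot_lt_Ctime HV Sy) (edf_Ctime_le le_ji sched_i sched_j lt_rC).
Qed.

Lemma Ctime_truncate j : scheduled T j -> Ctime I T j = Ctime I S j.
Proof. by move=> sched_j; apply: eq_bigl => y; rewrite truncate_slotE. Qed.

Lemma valid_truncate : valid_schedule I T.
Proof.
split=> [x j /truncate_SomeE[Sx _ _]|j sched_j]; first exact: (valid_slot HV Sx).
move/scheduled_truncate: (sched_j) => [_ sched_Sj _].
by under eq_bigr do rewrite truncate_slotE //; apply: (proj2 HV).
Qed.

Lemma edf_truncate : edf I T.
Proof.
move=> x j /truncate_SomeE[Sx _ _] j' sched_j' le_rx; rewrite Ctime_truncate //.
by move/scheduled_truncate: (sched_j') => [_ sched_Sj' _]; exact: (HE Sx sched_Sj' le_rx).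
Qed.

Lemma scheduled_truncate_self : scheduled T i.
Proof.
apply/scheduled_truncate; split=> //.
have C_gt0 : 0 < C by apply/scheduled_Ctime_gt0.
have [_ /andP[le_r _]] := valid_slot HV (Ctime_last C_gt0); lia.
Qed.

Lemma Cmax_truncate : Cmax I T = C.
Proof.
apply/eqP; rewrite eqn_leq; apply/andP; split.
  by apply/bigmax_leqP_seq => j _ _; apply: Ctime_le => y /truncate_SomeE[].
rewrite -{1}(Ctime_truncate scheduled_truncate_self); apply: leq_bigmax_seq => //.
by rewrite mem_index_iota; have := scheduled_job HV sched_i; lia.
Qed.

Lemma sk_schedule_truncate s k : i <= k -> sk_schedule I s k S -> sk_schedule I s i T.
Proof.
move=> le_ik [_ [_ [_ sched_S]]].
have C_gt0 : 0 < C by apply/scheduled_Ctime_gt0.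
have Cmax_s_T : Cmax_s I s T = C by rewrite /Cmax_s Cmax_truncate; case: eqP => // C0; lia.
have le_C_Cmax := Ctime_le_Cmax_s S s (scheduled_job HV sched_i).
split; first exact: valid_truncate.
split; first exact: edf_truncate.
split; first by rewrite Cmax_s_T Ctime_le_dl.
move=> j; rewrite Cmax_s_T scheduled_truncate; split.
- by case=> le_ji /sched_S[/andP[j_gt0 _] [le_sr _]] lt_rC; rewrite j_gt0 le_ji.
- case=> /andP[j_gt0 le_ji] [le_sr lt_rC]; split=> //; apply/sched_S; lia.
Qed.

Lemma truncate_witness s k : i <= k -> sk_schedule I s k S ->
  exists S', sk_schedule I s i S' /\ scheduled S' i /\ Ctime I S' i = C.
Proof.
move=> le_ik HS; exists T; split; first exact: sk_schedule_truncate HS.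
by split; [exact: scheduled_truncate_self|exact: Ctime_truncate scheduled_truncate_self].
Qed.

End Truncation.

Lemma fixed_segment_low_block u t i :
  fixed_segment I S u t -> u < Ctime I S i <= t ->
  exists v, v <= rel I i /\
    forall x, v <= x < Ctime I S i -> exists j, [/\ S x = Some j, j <= i & v <= rel I j].
Proof.
move=> fixed /andP[lt_uC le_Ct]; set C := Ctime I S i.
have /Ctime_last last_i : 0 < C by apply: leq_ltn_trans lt_uC.
pose low x := if S x is Some j then j <= i else false.
pose good v := (u <= v) && all low (index_iota v C).
have goodC : good C by rewrite /good /index_iota subnn ltnW.
have [v /andP[le_uv all_low] v_min] := ex_minnP (ex_intro good C goodC).
have le_vC : v <= C := v_min C goodC.
have low_after x : v <= x < C -> exists2 j, S x = Some j & j <= i.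
  move=> x_in; move/allP: all_low => /(_ x); rewrite mem_index_iota /low => /(_ x_in).
  by case: (S x) => // j le_ji; exists j.
have high_before : u < v -> exists2 j0, S v.-1 = Some j0 & i < j0.
  move=> lt_uv; have [j0 [Sv _]] := fixed v.-1 ltac:(lia).
  exists j0 => //; rewrite ltnNge; apply/negP => le_j0i.
  suff : v <= v.-1 by lia.
  apply: v_min; rewrite /good (_ : index_iota v.-1 C = v.-1 :: index_iota v C).
    by rewrite /= all_low /low Sv le_j0i andbT; lia.
  rewrite /index_iota (_ : C - v.-1 = (C - v).+1); last by lia.
  by rewrite /= prednK //; lia.
have released x j : v <= x < C -> S x = Some j -> v <= rel I j.
  move=> x_in Sx; have [j' [Sx' [/andP[le_ur _] _]]] := fixed x ltac:(lia).
  move: Sx' le_ur; rewrite Sx => -[<-] le_ur.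
  have [le_vu|lt_uv] := leqP v u; first exact: leq_trans le_vu le_ur.
  have [j0 Sv lt_ij0] := high_before lt_uv.
  have [j1] := low_after x x_in; rewrite Sx => -[<-] le_ji.
  rewrite leqNgt; apply/negP => lt_rv.
  have : j0 <= j.
    apply: edf_pending_index Sv (ex_intro _ x Sx) _.
    by have := slot_lt_Ctime HV Sx; lia.
  by lia.
have lt_vC : v < C.
  rewrite ltn_neqAle le_vC andbT; apply/eqP => eq_vC.
  have [j0 Sv lt_ij0] := high_before ltac:(lia).
  by move: Sv; rewrite eq_vC last_i => -[eq_j0]; lia.
exists v; split=> [|x x_in]; first by apply: (released C.-1); [lia|].
have [j Sx le_ji] := low_after x x_in; exists j; split=> //; exact: released Sx.
Qed.

End EdfSchedule.

Lemma fixed_segment_Ctime_le (I : instance)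
  (dl_increasing : forall j j', 1 <= j -> j < j' -> j' <= njobs I -> dl I j < dl I j')
  s k (S S2 : schedule) u t i :
  sk_schedule I s k S -> fixed_segment I S u t -> u < Ctime I S i <= t -> i <= k ->
  sk_schedule I s i S2 -> scheduled S2 i -> Ctime I S i <= Ctime I S2 i.
Proof.
move=> [HV [HE [_ sched_S]]] fixed u_C_t le_ik [HV2 [HE2 [_ sched_S2]]] sched2_i.
set C := Ctime I S i; set c := Ctime I S2 i.
rewrite leqNgt; apply/negP => lt_cC.
have C_gt0 : 0 < C by case/andP: u_C_t; lia.
have c_gt0 : 0 < c by apply/(scheduled_Ctime_gt0 HV2).
have sched_i : scheduled S i by apply/(scheduled_Ctime_gt0 HV).
have [v [le_vr_i block]] := fixed_segment_low_block HV HE dl_increasing fixed u_C_t.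
have le_C_Cmax := Ctime_le_Cmax_s S s (scheduled_job HV sched_i).
have le_c_Cmax := Ctime_le_Cmax_s S2 s (scheduled_job HV2 sched2_i).
pose Q j := [&& 0 < j, j <= i, v <= rel I j, rel I j < c & rel I s <= rel I j].
have Q_sched j : Q j -> scheduled S j /\ scheduled S2 j.
  by move=> /and5P[j_gt0 le_ji le_vr lt_rc le_sr]; split; [apply/sched_S|apply/sched_S2]; lia.
have Qi : Q i.
  have [_ /andP[le_ri _]] := valid_slot HV2 (Ctime_last c_gt0).
  have /sched_S[/andP[i_gt0 _] [le_si _]] := sched_i.
  by apply/and5P; split=> //; lia.
have busy x : v <= x < c -> exists j, [/\ S x = Some j, Q j & j < i.+1].
  move=> x_in; have [j [Sx le_ji le_vr]] := block x ltac:(lia).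
  have /sched_S[/andP[j_gt0 _] [le_sr _]] : scheduled S j by exists x.
  have [_ /andP[le_rx _]] := valid_slot HV Sx.
  by exists j; split; rewrite ?ltnS //; apply/and5P; split=> //; lia.
have S2_within j : Q j -> forall y, S2 y = Some j -> v <= y < c.
  move=> Qj y S2y; have /and5P[_ le_ji le_vr lt_rc _] := Qj.
  have [_ sched2_j] := Q_sched j Qj.
  have [_ /andP[le_ry _]] := valid_slot HV2 S2y.
  have := edf_Ctime_le HV2 HE2 dl_increasing le_ji sched2_i sched2_j lt_rc.
  by have := slot_lt_Ctime HV2 S2y; lia.
have : \sum_(0 <= j < i.+1 | Q j) work S j v c < \sum_(0 <= j < i.+1 | Q j) work S2 j v c.
  apply: (ltn_sum (i := i)) => //; first by rewrite mem_index_iota ltnSn.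
    rewrite (work_eq_ptime HV2 sched2_i (S2_within i Qi)).
    by apply: (work_lt_ptime HV v (Ctime_last C_gt0)); lia.
  move=> j Qj; have [sched_j sched2_j] := Q_sched j Qj.
  by rewrite (work_eq_ptime HV2 sched2_j (S2_within j Qj)) work_le_ptime.
by have := length_le_sum_work busy; have := sum_work_le_length S2 Q i.+1 v c; lia.
Qed.

Theorem lemma2 (I : instance) (HI : valid_instance I)
  (s k : nat) (Hs : 1 <= s <= njobs I) (Hk : k <= njobs I)
  (S : schedule) (HS : sk_schedule I s k S)
  (t : nat) (Ht : Cmax_s I s S = t)
  (u : nat) (Hfix : fixed_segment I S u t) :
  forall i, 1 <= i <= k -> u < Ctime I S i <= t ->
    is_Cedf I s i (Ctime I S i).
Proof.
move=> i /andP[_ le_ik] u_C_t.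
have dl_increasing := proj1 (proj2 HI).
have [HV [HE _]] := HS.
have sched_i : scheduled S i by apply/(scheduled_Ctime_gt0 HV); case/andP: u_C_t; lia.
split; first exact: (truncate_witness HV HE dl_increasing sched_i le_ik HS).
move=> S2 HS2 sched2_i.
exact: (fixed_segment_Ctime_le dl_increasing HS Hfix u_C_t le_ik HS2 sched2_i).
Qed.
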